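(* Let $M$ be a commutative semiring. Then $M$ is a semifield if and only if for every non-constant fuzzy ideal $\mu$ of $M$ one has $\mu(x)=\mu(y)<\mu(0)$ for all $x,y\in M\setminus\{0\}$.
   Context: Semirings are taken in the sense of Golan: $(M,+)$ is a commutative monoid with identity $0$, $(M,\cdot)$ is a monoid with identity $1\neq 0$, multiplication distributes over addition, and $0x=x0=0$. A semifield is a commutative semiring in which every nonzero element has a multiplicative inverse. A fuzzy ideal of $M$ is a map $\mu:M\to[0,1]$, not identically $0$, with $\mu(x+y)\ge\min[\mu(x),\mu(y)]$, $\mu(xy)\ge\mu(y)$ and $\mu(xy)\ge\mu(x)$ for all $x,y\in M$. Non-constant means not constant on $M$. *)

From HB Require Import structures.
From mathcomp Require Import all_boot all_algebra.
From Stdlib Require Import Reals.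
Set Implicit Arguments. Unset Strict Implicit. Unset Printing Implicit Defensive.
Import GRing.Theory.

(* A commutative semiring in Golan's sense (1 <> 0, 0 absorbing) is a
   MathComp comNzSemiRingType. *)

Definition is_semifield (M : comNzSemiRingType) : Prop :=
  forall x : M, x <> @GRing.zero M -> exists y : M, GRing.mul x y = @GRing.one M.

Definition fuzzy_ideal (M : comNzSemiRingType) (mu : M -> R) : Prop :=
  (forall x, Rle R0 (mu x) /\ Rle (mu x) R1) /\
  (exists x, mu x <> R0) /\
  (forall x y, Rle (Rmin (mu x) (mu y)) (mu (GRing.add x y))) /\
  (forall x y, Rle (mu y) (mu (GRing.mul x y))) /\
  (forall x y, Rle (mu x) (mu (GRing.mul x y))).

Definition non_constant (M : Type) (mu : M -> R) : Prop :=
  exists x y, mu x <> mu y.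

(* If M is a semifield, [mu 0 >= mu x = mu (x y) >= mu (x x^-1 y) = mu y] for
   nonzero x, y, so mu is constant off 0, and mu 0 must then exceed that value
   unless mu is constant.  Conversely, if x <> 0 is not a unit, the crisp
   indicator of the principal ideal xM is a non-constant fuzzy ideal taking
   the value 1 at x and 0 at 1. *)
From mathcomp Require Import all_boot all_algebra.
From Stdlib Require Import Reals Lra Classical ClassicalDescription.
Import GRing.Theory.

Set Implicit Arguments.
Unset Strict Implicit.

Local Open Scope ring_scope.

Section FuzzyIdealTheory.

Variables (M : comNzSemiRingType) (mu : M -> R).
Hypothesis mu_ideal : fuzzy_ideal mu.

Lemma fuzzy_ideal_mulr (x y : M) : Rle (mu x) (mu (x * y)).
Proof. by case: mu_ideal => _ [_ [_ [_ ]]]. Qed.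

Lemma fuzzy_ideal_le0 (x : M) : Rle (mu x) (mu 0).
Proof. by have := fuzzy_ideal_mulr x 0; rewrite mulr0. Qed.

Hypothesis M_semifield : is_semifield M.

Lemma semifield_fuzzy_ideal_le (x y : M) :
  x <> 0 -> Rle (mu x) (mu y).
Proof.
move=> /M_semifield [x' xx'1].
by have := fuzzy_ideal_mulr x (x' * y); rewrite mulrA xx'1 mul1r.
Qed.

Lemma semifield_fuzzy_ideal_eq (x y : M) :
  x <> 0 -> y <> 0 -> mu x = mu y.
Proof.
by move=> x0 y0; apply: Rle_antisym; apply: semifield_fuzzy_ideal_le.
Qed.

Lemma semifield_fuzzy_ideal_lt0 (x : M) :
  non_constant mu -> x <> 0 -> Rlt (mu x) (mu 0).
Proof.
move=> [a [b mu_ab]] x0; case: (fuzzy_ideal_le0 x) => // mux_0.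
suff mu_const z : mu z = mu 0 by case: mu_ab; rewrite !mu_const.
have [-> //|/eqP z0] := eqVneq z 0.
by rewrite -mux_0; apply: semifield_fuzzy_ideal_eq.
Qed.

End FuzzyIdealTheory.

Section CrispIndicator.

Variable T : Type.

Definition indicator (I : T -> Prop) (z : T) : R :=
  if excluded_middle_informative (I z) then R1 else R0.

Lemma indicator_in (I : T -> Prop) z : I z -> indicator I z = R1.
Proof. by rewrite /indicator; case: excluded_middle_informative. Qed.

Lemma indicator_notin (I : T -> Prop) z : ~ I z -> indicator I z = R0.
Proof. by rewrite /indicator; case: excluded_middle_informative. Qed.

Lemma indicator_bounds (I : T -> Prop) z :
  Rle R0 (indicator I z) /\ Rle (indicator I z) R1.
Proof. rewrite /indicator; case: excluded_middle_informative => ? /=; lra. Qed.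

Lemma indicator_le (I : T -> Prop) u v :
  (I u -> I v) -> Rle (indicator I u) (indicator I v).
Proof.
move=> Iuv; case: (classic (I u)) => [Iu|nIu].
  by rewrite (indicator_in Iu) (indicator_in (Iuv Iu)); apply: Rle_refl.
by rewrite indicator_notin //; case: (indicator_bounds I v).
Qed.

Lemma indicator_min_le (I : T -> Prop) u v w :
  (I u -> I v -> I w) -> Rle (Rmin (indicator I u) (indicator I v)) (indicator I w).
Proof.
move=> Iuvw; case: (classic (I u)) => [Iu|nIu].
  exact: Rle_trans (Rmin_r _ _) (indicator_le (Iuvw Iu)).
by apply: Rle_trans (Rmin_l _ _) (indicator_le _) => /nIu.
Qed.

End CrispIndicator.

Section CrispIdeal.

Variable M : comNzSemiRingType.

Lemma fuzzy_ideal_indicator (I : M -> Prop) (a : M) : I a ->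
  (forall u v, I u -> I v -> I (u + v)) -> (forall u v, I v -> I (u * v)) ->
  fuzzy_ideal (indicator I).
Proof.
move=> Ia I_add I_mul; split; first exact: indicator_bounds.
split; first by exists a; rewrite (indicator_in Ia); exact: R1_neq_R0.
split; first by move=> u v; apply: indicator_min_le; apply: I_add.
split=> u v; apply: indicator_le; first exact: I_mul.
by rewrite mulrC; apply: I_mul.
Qed.

Definition principal_ideal (x : M) (z : M) : Prop := exists m, z = x * m.

Lemma principal_ideal_self (x : M) : principal_ideal x x.
Proof. by exists 1; rewrite mulr1. Qed.

Lemma fuzzy_ideal_principal_indicator (x : M) :
  fuzzy_ideal (indicator (principal_ideal x)).
Proof.
apply: (fuzzy_ideal_indicator (principal_ideal_self x)).
  by move=> _ _ [m ->] [n ->]; exists (m + n); rewrite mulrDr.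
by move=> u _ [m ->]; exists (u * m); rewrite mulrCA.
Qed.

End CrispIdeal.

Theorem theorem3p9 (M : comNzSemiRingType) :
  is_semifield M <->
  (forall mu : M -> R, fuzzy_ideal mu -> non_constant mu ->
     forall x y : M, x <> @GRing.zero M -> y <> @GRing.zero M ->
       mu x = mu y /\ Rlt (mu y) (mu (@GRing.zero M))).
Proof.
split=> [M_sf mu mu_ideal mu_nc x y x0 y0 | fuzzy_cond x x0].
  split; first exact: semifield_fuzzy_ideal_eq.
  exact: semifield_fuzzy_ideal_lt0.
apply: NNPP => x_nonunit.
pose mu := indicator (principal_ideal x).
have mu_x : mu x = R1 by apply/indicator_in/principal_ideal_self.
have mu_1 : mu 1 = R0 by apply: indicator_notin => -[m /esym xm1]; apply: x_nonunit; exists m.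
have one0 : (1 : M) <> 0 by apply/eqP/oner_neq0.
have mu_nc : non_constant mu by exists x, 1; rewrite mu_x mu_1; exact: R1_neq_R0.
have [] := fuzzy_cond mu (fuzzy_ideal_principal_indicator x) mu_nc x 1 x0 one0.
by rewrite mu_x mu_1 => /R1_neq_R0.
Qed.
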